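(* Work in a polymorphically typed functional language (a polymorphic lambda-calculus with Haskell-like datatypes; possibly with undefinedness $\bot$ and partial functions, and possibly with Haskell's $\mathit{seq}$) for which the relational parametricity theorem holds. Let $\tau$, $\tau_1$, $\tau_2$ be closed types, and let $g :: \tau_1 \to \tau_2$ be a closed term which is (i) strict, if the language setting includes partially defined functions, and (ii) strict and total, if the language setting includes $\mathit{seq}$. Let $e :: \tau$ be a term which may involve the type variable $\alpha$ (but $\alpha$ does not occur in its overall type $\tau$, which is closed) and which may contain the term variables $\mathit{pre} :: \tau_1 \to \alpha$ and $\mathit{post} :: \alpha \to \tau_2$, but no other free (type or term) variables. Then \[ e[\tau_1/\alpha,\ \mathit{id}_{\tau_1}/\mathit{pre},\ g/\mathit{post}] \;=\; e[\tau_2/\alpha,\ g/\mathit{pre},\ \mathit{id}_{\tau_2}/\mathit{post}], \] where $e[\cdot/\cdot]$ denotes simultaneous substitution and $=$ is semantic equality.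
   Context: The relational parametricity theorem (fundamental lemma of logical relations) is assumed to hold for the language: types are interpreted as relations $\Delta_{\rho,\sigma}$, with base types as identity relations, function types via $(f,g)\in \mathcal{R}_1\to\mathcal{R}_2$ iff $f$ maps $\mathcal{R}_1$-related arguments to $\mathcal{R}_2$-related results (with the additional requirement $f=\bot \Leftrightarrow g=\bot$ when $\mathit{seq}$ is present), datatype constructors via corresponding relational liftings, and type variables interpreted by admissible relations $\mathcal{R}$ between closed types (strict, i.e. $(\bot,\bot)\in\mathcal{R}$, in the presence of partiality; strict and total, i.e. $(a,b)\in\mathcal{R}$ implies $a=\bot\Leftrightarrow b=\bot$, in the presence of $\mathit{seq}$); the theorem says every term, with free term variables instantiated by related closed terms, is related to itself at the relational interpretation of its type, and for closed types this relation is the identity. A function $g$ is strict if $g\,\bot=\bot$, and total if $g\,x=\bot$ implies $x=\bot$. $\mathit{id}_{\tau}$ denotes the identity function on type $\tau$. *)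

(* Abstract denotational model of a polymorphic functional language:
   closed types denote pointed omega-CPOs (in the settings with bottom),
   function types come with (continuous) application, identity functions
   and a bottom function.  A term e :: tau with free type variable alpha and
   free term variables pre :: tau1 -> alpha, post :: alpha -> tau2 is
   modelled by its denotation as a family indexed by the instantiation of
   alpha and the values of pre and post.  Relational parametricity of e is
   assumed via the predicate [Parametric] below (the fundamental lemma
   instantiated at the type of e, whose closed result type is interpreted
   as the identity relation). *)

Set Implicit Arguments.

Inductive setting := Total | Partial | WithSeq.

Record Model (s : setting) := {
  ty : Type;
  el : ty -> Type;
  arr : ty -> ty -> ty;
  app : forall a b, el (arr a b) -> el a -> el b;
  idf : forall a, el (arr a a);
  app_id : forall a (x : el a), app (idf a) x = x;
  le : forall a, el a -> el a -> Prop;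
  bot : forall a, el a;
  lub : forall a, (nat -> el a) -> el a;
  le_refl : s <> Total -> forall a (x : el a), le x x;
  le_trans : s <> Total -> forall a (x y z : el a), le x y -> le y z -> le x z;
  le_antisym : s <> Total -> forall a (x y : el a), le x y -> le y x -> x = y;
  bot_least : s <> Total -> forall a (x : el a), le (bot a) x;
  lub_ub : s <> Total -> forall a (c : nat -> el a),
      (forall n, le (c n) (c (S n))) -> forall n, le (c n) (lub c);
  lub_least : s <> Total -> forall a (c : nat -> el a) (u : el a),
      (forall n, le (c n) (c (S n))) -> (forall n, le (c n) u) -> le (lub c) u;
  app_cont : s <> Total -> forall a b (f : el (arr a b)) (c : nat -> el a),
      (forall n, le (c n) (c (S n))) ->
      app f (lub c) = lub (fun n => app f (c n));
  app_bot : s <> Total -> forall a b (x : el a), app (bot (arr a b)) x = bot b;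
  (* Haskell-98-like datatypes: every closed type has a defined value *)
  nontrivial : s = WithSeq -> forall a, exists x : el a, x <> bot a
}.

Arguments ty {s} _.
Arguments el {s} _ _.
Arguments arr {s} _ _ _.
Arguments app {s} _ {a b} _ _.
Arguments idf {s} _ a.
Arguments le {s} _ {a} _ _.
Arguments bot {s} _ a.
Arguments lub {s} _ {a} _.

Section Rel.
Variables (s : setting) (M : Model s).

Definition is_chain {a : ty M} (c : nat -> el M a) : Prop :=
  forall n, le M (c n) (c (S n)).

Definition strict_rel {a b : ty M} (R : el M a -> el M b -> Prop) : Prop :=
  R (bot M a) (bot M b).

Definition total_rel {a b : ty M} (R : el M a -> el M b -> Prop) : Prop :=
  forall x y, R x y -> (x = bot M a <-> y = bot M b).

Definition chain_closed {a b : ty M} (R : el M a -> el M b -> Prop) : Prop :=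
  forall (c1 : nat -> el M a) (c2 : nat -> el M b), is_chain c1 -> is_chain c2 -> (forall n, R (c1 n) (c2 n)) ->
    R (lub M c1) (lub M c2).

Definition allowed_rel {a b : ty M} (R : el M a -> el M b -> Prop) : Prop :=
  match s with
  | Total => True
  | Partial => strict_rel R /\ chain_closed R
  | WithSeq => strict_rel R /\ total_rel R /\ chain_closed R
  end.

Definition fun_rel {a1 a2 b1 b2 : ty M}
    (R1 : el M a1 -> el M a2 -> Prop) (R2 : el M b1 -> el M b2 -> Prop)
    (f : el M (arr M a1 b1)) (g : el M (arr M a2 b2)) : Prop :=
  (forall x y, R1 x y -> R2 (app M f x) (app M g y)) /\
  (s = WithSeq -> (f = bot M _ <-> g = bot M _)).

(* Identity relation (interpretation of closed types). *)
Definition Eqr {a : ty M} (x y : el M a) : Prop := x = y.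

Definition Parametric {t t1 t2 : ty M}
    (e : forall a : ty M, el M (arr M t1 a) -> el M (arr M a t2) -> el M t) : Prop :=
  forall (a b : ty M) (R : el M a -> el M b -> Prop), allowed_rel R ->
  forall p1 p2 q1 q2,
    fun_rel (@Eqr t1) R p1 p2 -> fun_rel R (@Eqr t2) q1 q2 ->
    e a p1 q1 = e b p2 q2.

Definition strict_fun {a b : ty M} (g : el M (arr M a b)) : Prop :=
  app M g (bot M a) = bot M b.

Definition total_fun {a b : ty M} (g : el M (arr M a b)) : Prop :=
  forall x, app M g x = bot M b -> x = bot M a.

End Rel.

(* Instantiate the parametricity of e at the graph of g, relating t1 to t2:
   the pair (id, g) is then related to (g, id) at both argument types, so the
   two instances of e coincide.  Strictness of g makes the graph strict,
   continuity of g makes it closed under lubs, and totality of g makes it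
   total; in the presence of seq, g and the identities are moreover defined
   functions because every type has a defined value. *)

From Stdlib Require Import FunctionalExtensionality.

Section Graph.
Variables (s : setting) (M : Model s).

Definition graph {a b : ty M} (f : el M (arr M a b)) (x : el M a) (y : el M b) : Prop :=
  app M f x = y.

Lemma graph_chain_closed (a b : ty M) (f : el M (arr M a b)) :
  s <> Total -> chain_closed M (graph f).
Proof.
  intros Hs c1 c2 Hc1 _ Hc. unfold graph in *.
  rewrite (app_cont M Hs _ _ f _ Hc1).
  f_equal. apply functional_extensionality. exact Hc.
Qed.

Lemma graph_total (a b : ty M) (f : el M (arr M a b)) :
  strict_fun M f -> total_fun M f -> total_rel M (graph f).
Proof.
  intros Hstrict Htotal x y <-. split.
  - intros ->. exact Hstrict.
  - apply Htotal.
Qed.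

Lemma total_fun_idf (a : ty M) : total_fun M (idf M a).
Proof. intros x. rewrite app_id. exact (fun H => H). Qed.

Lemma total_fun_neq_bot {a b : ty M} {f : el M (arr M a b)} :
  s = WithSeq -> total_fun M f -> f <> bot M (arr M a b).
Proof.
  intros Hw Htotal Hbot.
  assert (Hs : s <> Total) by congruence.
  destruct (nontrivial M Hw a) as [x Hx].
  apply Hx, Htotal. rewrite Hbot. exact (app_bot M Hs _ _ x).
Qed.

Section Pair.
Variables (a b : ty M) (g : el M (arr M a b)).
Hypothesis g_defined : s = WithSeq -> total_fun M g.

Lemma fun_rel_idf_graph : fun_rel M (@Eqr s M a) (graph g) (idf M a) g.
Proof.
  split.
  - intros x y <-. unfold graph. rewrite app_id. reflexivity.
  - intros Hw.
    pose proof (total_fun_neq_bot Hw (total_fun_idf a)).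
    pose proof (total_fun_neq_bot Hw (g_defined Hw)).
    tauto.
Qed.

Lemma fun_rel_graph_idf : fun_rel M (graph g) (@Eqr s M b) g (idf M b).
Proof.
  split.
  - intros x y Hxy. unfold Eqr. rewrite app_id. exact Hxy.
  - intros Hw.
    pose proof (total_fun_neq_bot Hw (g_defined Hw)).
    pose proof (total_fun_neq_bot Hw (total_fun_idf b)).
    tauto.
Qed.

End Pair.
End Graph.

Arguments graph {s M a b} f x y.

Lemma graph_allowed {s : setting} {M : Model s} {a b : ty M} (f : el M (arr M a b)) :
  (s = Partial -> strict_fun M f) ->
  (s = WithSeq -> strict_fun M f /\ total_fun M f) ->
  allowed_rel M (graph f).
Proof.
  intros HP HS. unfold allowed_rel. destruct s.
  - exact I.
  - split; [apply HP; reflexivity | apply graph_chain_closed; discriminate].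
  - destruct (HS eq_refl) as [Hstrict Htotal].
    split; [exact Hstrict | split].
    + apply graph_total; assumption.
    + apply graph_chain_closed; discriminate.
Qed.

Theorem lemma1 (s : setting) (M : Model s) (t t1 t2 : ty M)
    (g : el M (arr M t1 t2))
    (e : forall a : ty M, el M (arr M t1 a) -> el M (arr M a t2) -> el M t) :
  (s = Partial -> strict_fun M g) ->
  (s = WithSeq -> strict_fun M g /\ total_fun M g) ->
  Parametric M e ->
  e t1 (idf M t1) g = e t2 g (idf M t2).
Proof.
  intros HP HS Hpar.
  assert (g_defined : s = WithSeq -> total_fun M g) by (intros Hw; apply (HS Hw)).
  apply (Hpar t1 t2 (graph g)).
  - exact (graph_allowed g HP HS).
  - apply fun_rel_idf_graph, g_defined.
  - apply fun_rel_graph_idf, g_defined.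
Qed.
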